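(* Let $\mathcal B=(\mathcal L,\mathcal R,\omega,\lambda,\rho)$ be a bimachine realizing a transduction $f$. Then $\mathcal L\sqsubseteq \mathit{Left}_f(\mathcal R)$ and $\mathcal R\sqsubseteq\mathit{Right}_f(\mathcal L)$.
   Context: Notation: for words $u\preceq v$ (prefix), $u^{-1}v$ is the word $v'$ with $uv'=v$; $\bigwedge L$ is the longest common prefix of the words of $L$ ($\bigwedge\emptyset=\varepsilon$). A transduction is a partial function $f:\Sigma^*\to\Sigma^*$. A (left) automaton here is a complete deterministic automaton $\mathcal L$ with initial state $l_0$; $[u]_{\mathcal L}$ denotes the state reached from $l_0$ on $u$, and $u\sim_{\mathcal L}v$ iff $[u]_{\mathcal L}=[v]_{\mathcal L}$. A right automaton $\mathcal R=(Q,\Delta,\{r_0\},F)$ is an automaton that is backward deterministic and backward complete (for each $q,\sigma$ there is exactly one $p$ with $(p,\sigma,q)\in\Delta$); it reads words right to left: $[u]_{\mathcal R}$ is the unique state $p$ with a run on $u$ from $p$ to $r_0$, $u$ is accepted iff $[u]_{\mathcal R}\in F$, and $u\sim_{\mathcal R}v$ iff $[u]_{\mathcal R}=[v]_{\mathcal R}$. For two left (resp. right) automata, $\mathcal A_1\sqsubseteq\mathcal A_2$ means $u\sim_{\mathcal A_1}v\Rightarrow u\sim_{\mathcal A_2}v$. A bimachine $\mathcal B=(\mathcal L,\mathcal R,\omega,\lambda,\rho)$ consists of a left automaton $\mathcal L$ (states $Q_{\mathcal L}$, finals $F_{\mathcal L}$) and a right automaton $\mathcal R$ (states $Q_{\mathcal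 R}$, finals $F_{\mathcal R}$) accepting the same language, $\omega:Q_{\mathcal L}\times\Sigma\times Q_{\mathcal R}\to\Sigma^*$, $\lambda:F_{\mathcal R}\to\Sigma^*$, $\rho:F_{\mathcal L}\to\Sigma^*$. It realizes the transduction with domain the accepted language and $u\mapsto\lambda([u]_{\mathcal R})\,\omega([u[1..0]]_{\mathcal L},u[1],[u[2..n]]_{\mathcal R})\cdots\omega([u[1..n-1]]_{\mathcal L},u[n],[\varepsilon]_{\mathcal R})\,\rho([u]_{\mathcal L})$ where $n=|u|$. Left minimization: given $f$ and a right automaton $\mathcal R$ with accepted language $\mathrm{dom}(f)$, let $\widehat f_{[w]_{\mathcal R}}(u)=\bigwedge\{f(uv)\mid v\sim_{\mathcal R}w,\ uv\in\mathrm{dom}(f)\}$, and define $u\sim_L v$ iff for all $w$: $uw\in\mathrm{dom}(f)\Leftrightarrow vw\in\mathrm{dom}(f)$, and if $uw\in\mathrm{dom}(f)$ then $\widehat f_{[w]_{\mathcal R}}(u)^{-1}f(uw)=\widehat f_{[w]_{\mathcal R}}(v)^{-1}f(vw)$. This is a right congruence; $\mathit{Left}_f(\mathcal R)$ is the deterministic automaton with states $\Sigma^*/{\sim_L}$, transitions $([u],\sigma,[u\sigma])$, initial state $[\varepsilon]$ and final states $\{[u]\mid u\in\mathrm{dom}(f)\}$. $\mathit{Right}_f(\mathcal L)$ is defined symmetrically (mirror construction): it is the right automaton obtained by applying $\mathit{Left}$ to the mirrored transduction $w\mapsto \overline{f(\overline w)}$ (where $\overline{x}$ is the mirror image of $x$)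 and the mirror of $\mathcal L$, and mirroring the result back. *)

From Stdlib Require Import ClassicalEpsilon.
From mathcomp Require Import all_boot.
Set Implicit Arguments. Unset Strict Implicit. Unset Printing Implicit Defensive.

Section Words.
Variable S : eqType.

(* u^{-1} v : drop the prefix u from v (used only when u is a prefix of v). *)
Definition lquot (u v : seq S) : seq S := drop (size u) v.

Definition is_lcp (P : seq S -> Prop) (p : seq S) : Prop :=
  ((forall x, ~ P x) -> p = [::]) /\
  ((exists x, P x) ->
     (forall x, P x -> prefix p x) /\
     (forall q, (forall x, P x -> prefix q x) -> prefix q p)).

Definition lcp (P : seq S -> Prop) : seq S :=
  epsilon (inhabits [::]) (is_lcp P).
End Words.

Record LeftAut (S : finType) := {
  lQ : finType;
  l0 : lQ;
  ldelta : lQ -> S -> lQ;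
  lfin : lQ -> bool }.

(* Right automaton: backward deterministic and backward complete, so the
   transition relation is the graph of a function: (p, s, q) in Delta iff
   p = rback q s. *)
Record RightAut (S : finType) := {
  rQ : finType;
  r0 : rQ;
  rback : rQ -> S -> rQ;
  rfin : rQ -> bool }.

Definition lstate S (A : LeftAut S) (u : seq S) : lQ A :=
  foldl (@ldelta S A) (@l0 S A) u.
(* [u]_R : the unique state p with a run on u from p to r0 *)
Definition rstate S (A : RightAut S) (u : seq S) : rQ A :=
  foldr (fun s q => @rback S A q s) (@r0 S A) u.

Record bimachine (S : finType) := {
  bmL : LeftAut S;
  bmR : RightAut S;
  bm_omega : lQ bmL -> S -> rQ bmR -> seq S;
  bm_lambda : rQ bmR -> seq S;   (* only relevant on final states of R *)
  bm_rho : lQ bmL -> seq S;      (* only relevant on final states of L *)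
  bm_same_lang : forall u, lfin (lstate bmL u) = rfin (rstate bmR u) }.

Fixpoint bm_mid S (B : bimachine S) (p : lQ (bmL B)) (u : seq S) : seq S :=
  match u with
  | [::] => [::]
  | s :: u' => bm_omega p s (rstate (bmR B) u') ++
               bm_mid (@ldelta S (bmL B) p s) u'
  end.

Definition bm_out S (B : bimachine S) (u : seq S) : option (seq S) :=
  if lfin (lstate (bmL B) u) then
    Some (bm_lambda (rstate (bmR B) u) ++ bm_mid (@l0 S (bmL B)) u
          ++ bm_rho (lstate (bmL B) u))
  else None.

Definition transduction (S : finType) := seq S -> option (seq S).

Definition realizes S (B : bimachine S) (f : transduction S) : Prop :=
  forall u, f u = bm_out B u.

Definition fhat S (f : transduction S) (R : RightAut S) (w u : seq S) : seq S :=
  lcp (fun x => exists v, rstate R v = rstate R w /\ f (u ++ v) = Some x).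

Definition simLeft S (f : transduction S) (R : RightAut S) (u v : seq S) : Prop :=
  forall w,
    (f (u ++ w) <> None <-> f (v ++ w) <> None) /\
    (forall y y', f (u ++ w) = Some y -> f (v ++ w) = Some y' ->
       lquot (fhat f R w u) y = lquot (fhat f R w v) y').

(* The state of Left_f(R) reached on u, i.e. the class [u] of ~_L. *)
Definition Left_state S (f : transduction S) (R : RightAut S) (u : seq S)
  : seq S -> Prop := fun w => simLeft f R u w.

Definition mirror_f S (f : transduction S) : transduction S :=
  fun w => omap (@rev S) (f (rev w)).

(* the mirror of a left automaton, seen as a right automaton reading
   mirrored words: [w]_{mirror L} = [rev w]_L *)
Definition mirror_left S (A : LeftAut S) : RightAut S :=
  {| rQ := lQ A; r0 := @l0 S A; rback := @ldelta S A; rfin := @lfin S A |}.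

(* The state of Right_f(L) reached on u (reading right to left):
   mirror of Left_{mirror f}(mirror L), so it is the class of rev u. *)
Definition Right_state S (f : transduction S) (L : LeftAut S) (u : seq S)
  : seq S -> Prop := Left_state (mirror_f f) (mirror_left L) (rev u).

Definition sqsub_Left S (L : LeftAut S) (f : transduction S) (R : RightAut S) :=
  forall u v, lstate L u = lstate L v -> Left_state f R u = Left_state f R v.

Definition sqsub_Right S (R : RightAut S) (f : transduction S) (L : LeftAut S) :=
  forall u v, rstate R u = rstate R v -> Right_state f L u = Right_state f L v.

(* Running the bimachine on uw, the output splits as a(u, [w]_R) . g([u]_L, w):
   a word determined by u and the right state of w, followed by a continuation
   determined by the left state of u and by w.  Then fhat_{[w]_R}(u) is
   a(u, [w]_R) followed by the longest common prefix of the continuations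
   g([u]_L, v) over v ~_R w, so stripping it from f(uw) leaves a word that only
   depends on [u]_L and w; hence [u]_L = [v]_L forces u ~_L v.  The claim for
   R is the same argument applied to the mirrored bimachine. *)

From Stdlib Require Import ClassicalEpsilon Classical FunctionalExtensionality PropExtensionality.
From mathcomp Require Import all_boot.
Set Implicit Arguments. Unset Strict Implicit. Unset Printing Implicit Defensive.

Lemma ex_max_le (R : nat -> Prop) (N : nat) : R 0 ->
  exists2 k, R k & forall j, j <= N -> R j -> j <= k.
Proof.
move=> R0; elim: N => [|N [k Rk kmax]]; first by exists 0 => // j; rewrite leqn0 => /eqP->.
case: (classic (R N.+1)) => [RN1 | notRN1]; first by exists N.+1.
exists k => // j; rewrite leq_eqVlt => /orP[/eqP-> // | ]; exact: kmax.
Qed.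

Section LongestCommonPrefix.
Variable S : eqType.
Implicit Types (P Q : seq S -> Prop) (a p q x y : seq S).

Lemma prefix_anti : antisymmetric (@prefix S).
Proof.
move=> p q /andP[pq qp].
have szE : size p = size q by apply/eqP; rewrite eqn_leq !size_prefix.
by move: pq; rewrite prefixE szE take_size => /eqP.
Qed.

Lemma lcp_exists P : exists p, is_lcp P p.
Proof.
case: (classic (exists x, P x)) => [[x0 Px0] | noP]; last first.
  by exists [::]; split=> // exP; case: (noP exP).
pose common k := forall x, P x -> prefix (take k x0) x.
have [k common_k kmax] : exists2 k, common k & forall j, j <= size x0 -> common j -> j <= k.
  by apply: ex_max_le => x _; rewrite take0 prefix0s.
exists (take k x0); split=> [noP | _]; first by case: (noP x0).
split=> // q q_common.
have q_x0 := q_common _ Px0.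
have qE : take (size q) x0 = q by apply/eqP; rewrite -prefixE.
have le_qk : size q <= k.
  by apply: kmax => [|x Px]; [exact: size_prefix | rewrite qE; exact: q_common].
by rewrite -qE -(take_takel _ le_qk) prefix_take.
Qed.

Lemma lcp_spec P : is_lcp P (lcp P).
Proof. exact: epsilon_spec (lcp_exists P). Qed.

Lemma is_lcp_unique P p q : is_lcp P p -> is_lcp P q -> p = q.
Proof.
move=> [p_nil p_max] [q_nil q_max].
case: (classic (exists x, P x)) => [exP | noP]; last first.
  have noP' x : ~ P x by move=> Px; apply: noP; exists x.
  by rewrite (p_nil noP') (q_nil noP').
have [p_common p_greatest] := p_max exP; have [q_common q_greatest] := q_max exP.
by apply/prefix_anti/andP; split; [apply: q_greatest | apply: p_greatest].
Qed.

Lemma prefix_cat_drop a q y : prefix q (a ++ y) ->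
  prefix q (a ++ drop (size a) q) /\ prefix (drop (size a) q) y.
Proof.
rewrite prefixE take_cat => /eqP <-.
case: ltnP => [lt_qa | le_aq]; last first.
  by rewrite drop_size_cat // prefix_refl prefix_take.
by rewrite drop_oversize ?size_take ?lt_qa ?(ltnW lt_qa) // cats0 prefix_take prefix0s.
Qed.

Lemma lcp_catl P Q a : (exists x, P x) ->
  (forall x, Q x <-> exists2 y, P y & x = a ++ y) -> lcp Q = a ++ lcp P.
Proof.
move=> [y0 Py0] QE; apply: (is_lcp_unique (lcp_spec Q)).
have [_ /(_ (ex_intro _ y0 Py0)) [P_common P_greatest]] := lcp_spec P.
split=> [noQ | _]; first by case: (noQ (a ++ y0)); apply/QE; exists y0.
split=> [x /QE [y Py ->] | q q_common]; first by rewrite prefix_catr ?eqxx ?P_common.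
have Q_a_y y : P y -> prefix q (a ++ y) by move=> Py; apply/q_common/QE; exists y.
have [q_le _] := prefix_cat_drop (Q_a_y _ Py0).
apply: prefix_trans q_le _; rewrite prefix_catr ?eqxx //=.
by apply: P_greatest => y Py; have [] := prefix_cat_drop (Q_a_y _ Py).
Qed.

End LongestCommonPrefix.
Section LeftCongruence.
Variables (S : finType) (f : transduction S) (R : RightAut S).

Lemma simLeft_sym u v : simLeft f R u v -> simLeft f R v u.
Proof.
move=> uv w; have [dom_uv out_uv] := uv w.
by split=> [|y y' fvw fuw]; [apply: iff_sym | symmetry; apply: out_uv].
Qed.

Lemma simLeft_trans u v x : simLeft f R u v -> simLeft f R v x -> simLeft f R u x.
Proof.
move=> uv vx w; have [dom_uv out_uv] := uv w; have [dom_vx out_vx] := vx w.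
split=> [|y y'' fuw fxw]; first exact: iff_trans dom_uv dom_vx.
case fvw: (f (v ++ w)) => [y'|]; last by case: (proj1 dom_uv ^~ fvw); rewrite fuw.
by rewrite (out_uv _ _ fuw fvw) (out_vx _ _ fvw fxw).
Qed.

Lemma Left_state_simLeft u v : simLeft f R u v -> Left_state f R u = Left_state f R v.
Proof.
move=> uv; apply: functional_extensionality => x.
apply: propositional_extensionality; split.
  exact: simLeft_trans (simLeft_sym uv).
exact: simLeft_trans uv.
Qed.

Definition left_factorization (L : LeftAut S)
    (g : lQ L -> seq S -> option (seq S)) :=
  forall u, exists a : rQ R -> seq S,
    forall w, f (u ++ w) = omap (cat (a (rstate R w))) (g (lstate L u) w).

Lemma fhat_factor (g : seq S -> option (seq S)) (a : rQ R -> seq S) u w y :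
  (forall w', f (u ++ w') = omap (cat (a (rstate R w'))) (g w')) ->
  g w = Some y ->
  fhat f R w u = a (rstate R w) ++
    lcp (fun x => exists v, rstate R v = rstate R w /\ g v = Some x).
Proof.
move=> f_uw gw; apply: lcp_catl => [|x]; first by exists y, w.
split=> [[v [vw]] | [z [v [vw gv]] ->]]; last by exists v; rewrite f_uw vw gv.
rewrite f_uw vw; case gv: (g v) => [z|] //= [<-].
by exists z => //; exists v.
Qed.

Lemma sqsub_Left_factorization L (g : lQ L -> seq S -> option (seq S)) :
  left_factorization g -> sqsub_Left L f R.
Proof.
move=> fact u v uv; apply: Left_state_simLeft => w.
have [au f_u] := fact u; have [av f_v] := fact v.
rewrite f_u f_v uv; split; first by case: (g _ w).
case gw: (g (lstate L v) w) => [z|] //= _ _ [<-] [<-].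
rewrite (fhat_factor (a := au) _ gw) => [|w']; last by rewrite f_u uv.
rewrite (fhat_factor (a := av) f_v gw) /lquot !size_cat.
by rewrite !drop_cat !ltnNge !leq_addr /= !addKn.
Qed.

End LeftCongruence.

Section Runs.
Variable S : finType.

Definition lstate_from (A : LeftAut S) (p : lQ A) (x : seq S) : lQ A :=
  foldl (@ldelta S A) p x.

Definition rstate_from (A : RightAut S) (r : rQ A) (x : seq S) : rQ A :=
  foldr (fun s q => @rback S A q s) r x.

Lemma lstate_cat (A : LeftAut S) x y :
  lstate A (x ++ y) = lstate_from (lstate A x) y.
Proof. exact: foldl_cat. Qed.

Lemma rstate_cat (A : RightAut S) x y :
  rstate A (x ++ y) = rstate_from (rstate A y) x.
Proof. exact: foldr_cat. Qed.

Definition mirror_right (A : RightAut S) : LeftAut S :=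
  {| lQ := rQ A; l0 := @r0 S A; ldelta := @rback S A; lfin := @rfin S A |}.

Lemma lstate_mirror_right (A : RightAut S) u :
  lstate (mirror_right A) u = rstate A (rev u).
Proof. by rewrite -[in LHS](revK u) /lstate foldl_rev. Qed.

Lemma rstate_mirror_left (A : LeftAut S) w :
  rstate (mirror_left A) w = lstate A (rev w).
Proof. by rewrite /lstate foldl_rev. Qed.

Lemma sqsub_Right_mirror (R : RightAut S) (f : transduction S) (L : LeftAut S) :
  sqsub_Left (mirror_right R) (mirror_f f) (mirror_left L) -> sqsub_Right R f L.
Proof.
by move=> mirror_sub u v uv; apply: mirror_sub; rewrite !lstate_mirror_right !revK.
Qed.

End Runs.

Section Bimachine.
Variables (S : finType) (B : bimachine S) (f : transduction S).
Hypothesis B_f : realizes B f.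
Local Notation L := (bmL B).
Local Notation R := (bmR B).

Fixpoint bm_mid_at (p : lQ L) (x : seq S) (r : rQ R) : seq S :=
  if x is s :: x' then bm_omega p s (rstate_from r x') ++ bm_mid_at (ldelta p s) x' r
  else [::].

Lemma bm_mid_cat p x y :
  bm_mid p (x ++ y) = bm_mid_at p x (rstate R y) ++ bm_mid (lstate_from p x) y.
Proof. by elim: x p => [|s x IHx] p //=; rewrite IHx catA rstate_cat. Qed.

Lemma bm_out_cat x y : bm_out B (x ++ y) =
  if lfin (lstate L (x ++ y)) then
    Some (bm_lambda (rstate_from (rstate R y) x) ++ bm_mid_at (l0 L) x (rstate R y)
          ++ bm_mid (lstate L x) y ++ bm_rho (lstate_from (lstate L x) y))
  else None.
Proof. by rewrite /bm_out bm_mid_cat rstate_cat [in bm_rho _]lstate_cat !catA. Qed.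

Lemma bm_left_factorization :
  exists g : lQ L -> seq S -> option (seq S), left_factorization f R g.
Proof.
exists (fun p w => if lfin (lstate_from p w) then
                     Some (bm_mid p w ++ bm_rho (lstate_from p w)) else None) => u.
exists (fun r => bm_lambda (rstate_from r u) ++ bm_mid_at (l0 L) u r) => w.
by rewrite B_f bm_out_cat lstate_cat; case: ifP => //= _; rewrite !catA.
Qed.

Lemma bm_right_factorization :
  exists g : rQ R -> seq S -> option (seq S),
    left_factorization (L := mirror_right R) (mirror_f f) (mirror_left L) g.
Proof.
exists (fun q w => if rfin (rstate_from q (rev w)) then
   Some (rev (bm_mid_at (l0 L) (rev w) q) ++ rev (bm_lambda (rstate_from q (rev w))))
   else None) => u.
exists (fun p => rev (bm_rho (lstate_from p (rev u))) ++ rev (bm_mid p (rev u))) => w.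
rewrite /mirror_f rev_cat B_f bm_out_cat bm_same_lang rstate_cat.
rewrite lstate_mirror_right rstate_mirror_left.
by case: ifP => //= _; rewrite !rev_cat !catA.
Qed.

End Bimachine.

Theorem proposition3p3 (S : finType) (B : bimachine S) (f : transduction S) :
  realizes B f ->
  sqsub_Left (bmL B) f (bmR B) /\ sqsub_Right (bmR B) f (bmL B).
Proof.
move=> B_f; split.
  have [g g_fact] := bm_left_factorization B_f.
  exact: sqsub_Left_factorization g_fact.
apply: sqsub_Right_mirror.
have [g g_fact] := bm_right_factorization B_f.
exact: sqsub_Left_factorization g_fact.
Qed.
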